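(* Let $\tau_0\geq 3$. Consider an oriented hyperbolic surface with boundary equipped with an ideal triangulation with zero shear, with dual graph $\mathcal{G}$, and run the process that at each step chooses uniformly at random a pair $\{h_1,h_2\}$ of distinct half-edges of the current dual graph with $\tau(h_1,h_2)\geq\tau_0$ and glues the corresponding boundary sides (with zero shear, orientation-reversing), producing dual graphs $\mathcal{G}^{(t)}$. If $\mathcal{G}^{(t)}$ is safe for some $t$, then $\mathcal{G}^{(t+1)}$ is also safe; hence from then on the process saturates (i.e. continues until no half-edges remain) with certainty.
   Context: The dual graph $\mathcal{G}$ of a zero-shear ideal triangulation has one trivalent vertex per triangle, an edge for each interior side and a half-edge for each boundary side; the orientation of the surface makes it a ribbon graph. A non-backtracking path in $\mathcal{G}$ carries a word in the letters $L,R$ recording whether it turns left or right at each vertex it traverses; replacing $L$ by $\begin{pmatrix}1&1\\0&1\end{pmatrix}$ and $R$ by $\begin{pmatrix}1&0\\1&1\end{pmatrix}$ gives a matrix whose trace is the trace of the path. For distinct half-edges $h_1,h_2$, the trace distance $\tau(h_1,h_2)$ is the minimum of the traces greater than $2$ of paths starting on $h_1$ and ending on $h_2$ (and $+\infty$ if there are none). $\mathcal{G}$ is called safe if (1) $\tau(h,h')\geq\tau_0$ for all pairs of distinct half-edges $h,h'$, and (2) every cusp on the boundary of the associated surface is incident to at least $\sqrt{\tau_0-2}$ triangles, i.e. whenever two half-edges are connected by a path carrying $L^k$ or $R^k$, then $k\geq\sqrt{\tau_0-2}$. *)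

From HB Require Import structures.
From mathcomp Require Import all_boot all_order all_algebra all_fingroup.
Set Implicit Arguments. Unset Strict Implicit. Unset Printing Implicit Defensive.
Import Order.TTheory GRing.Theory Num.Theory.
Local Open Scope ring_scope.

(* D  : the sides of the triangles (one dart per (triangle, side));
   s  : the cyclic rotation of the sides of each triangle, induced by the
        orientation (s^3 = id, no fixed points: every orbit = one triangle,
        i.e. one trivalent vertex of the dual graph);
   a  : the gluing; a d = Some e when side d is glued to side e (an interior
        edge of the dual graph), a d = None when d is a boundary side
        (a half-edge of the dual graph).  With zero shear the hyperbolic
        structure is determined by these data. *)

Definition triangles (D : finType) (s : {perm D}) : Prop :=
  forall d, s d != d /\ s (s (s d)) = d.

Definition gluing_wf (D : finType) (a : D -> option D) : Prop :=
  forall d e, a d = Some e -> e != d /\ a e = Some d.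

Definition half_edge (D : finType) (a : D -> option D) (d : D) : bool :=
  a d == None.

(* Turn at a vertex: entering a triangle through side d, turning left (true)
   exits through side s d, turning right (false) through s^-1 d. *)
Definition turn (D : finType) (s : {perm D}) (t : bool) (d : D) : D :=
  if t then s d else (s^-1)%g d.

(* [npath s a d w h2]: there is a non-backtracking path in the dual graph which
   enters the triangle of side d through d, turns according to the word w at
   each vertex it traverses, crosses interior edges between consecutive
   vertices, and leaves through the side h2. *)
Fixpoint npath (D : finType) (s : {perm D}) (a : D -> option D)
    (d : D) (w : seq bool) (h2 : D) : Prop :=
  match w with
  | [::] => False
  | t :: w' =>
      let e := turn s t d in
      match w' with
      | [::] => e = h2
      | _ :: _ => exists d', a e = Some d' /\ npath s a d' w' h2
      end
  end.

Definition Lmx : 'M[int]_2 := \matrix_(i < 2, j < 2) (if (i <= j)%N then 1 else 0).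
Definition Rmx : 'M[int]_2 := \matrix_(i < 2, j < 2) (if (j <= i)%N then 1 else 0).

Definition letter_mx (t : bool) : 'M[int]_2 := if t then Lmx else Rmx.

Definition word_trace (w : seq bool) : int := \tr (\prod_(t <- w) letter_mx t).

(* tau(h1,h2) >= tau0 : every path from h1 to h2 with trace > 2 has trace >= tau0
   (this is what "min of such traces (+oo if none) >= tau0" unfolds to). *)
Definition tau_ge (R : rcfType) (D : finType) (s : {perm D}) (a : D -> option D)
    (h1 h2 : D) (tau0 : R) : Prop :=
  forall w, npath s a h1 w h2 -> 2 < word_trace w -> tau0 <= (word_trace w)%:~R.

Definition safe (R : rcfType) (D : finType) (s : {perm D}) (a : D -> option D)
    (tau0 : R) : Prop :=
  (forall h h', half_edge a h -> half_edge a h' -> h != h' -> tau_ge s a h h' tau0)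
  /\
  (forall h h' w, half_edge a h -> half_edge a h' -> npath s a h w h' ->
     (w = nseq (size w) true \/ w = nseq (size w) false) ->
     Num.sqrt (tau0 - 2) <= (size w)%:R).

Definition glue (D : finType) (a : D -> option D) (h1 h2 : D) : D -> option D :=
  fun d => if d == h1 then Some h2 else if d == h2 then Some h1 else a d.

Definition admissible (R : rcfType) (D : finType) (s : {perm D}) (a : D -> option D)
    (tau0 : R) (h1 h2 : D) : Prop :=
  [/\ half_edge a h1, half_edge a h2, h1 != h2 & tau_ge s a h1 h2 tau0].

Fixpoint run_ok (R : rcfType) (D : finType) (s : {perm D}) (a : D -> option D)
    (tau0 : R) (ps : seq (D * D)) : Prop :=
  match ps with
  | [::] => True
  | p :: ps' => admissible s a tau0 p.1 p.2 /\ run_ok s (glue a p.1 p.2) tau0 ps'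
  end.

Definition run_final (D : finType) (a : D -> option D) (ps : seq (D * D)) :=
  foldl (fun b p => glue b p.1 p.2) a ps.

Definition num_half_edges (D : finType) (a : D -> option D) : nat :=
  #|[pred d | half_edge a d]|.

From HB Require Import structures.
From mathcomp Require Import all_boot all_order all_algebra all_fingroup.
From mathcomp Require Import zify ring lra.
Import Order.TTheory GRing.Theory Num.Theory.
Set Implicit Arguments. Unset Strict Implicit. Unset Printing Implicit Defensive.

(* Words in L and R are evaluated in 2x2 matrices over nat, where the entrywise order is
   compatible with products: hence the trace of a word bounds the trace of each of its
   factors, a power b^k has trace 2, and b^k (~b)^m has trace 2 + k m.
   Cut a path of the glued graph between two half-edges at its crossings of the new edge;
   the pieces are paths of the old graph between old half-edges.  A mixed piece with
   distinct ends has trace >= tau0 by safety, and a piece b^k has k >= sqrt (tau0 - 2), so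
   b^k followed by (~b)^m has trace >= 2 + k m >= tau0.  The remaining configuration is a
   power b^K followed by a mixed loop X at the new edge.  If the path then turns b again,
   the loop can be cut out (turning twice by b is turning once by ~b in a triangle), which
   yields a shorter path of smaller trace; if it turns ~b, it backtracks, and b X ~b is a
   longer loop at the previous edge of b^K.  Once K is used up, the loop dominates
   b^p (~b)^(p+1), where p counts the backtracks, and the trace is >= 2 + (p+1)^2. *)

Record mx2 := Mx2 { m11 : nat; m12 : nat; m21 : nat; m22 : nat }.

Definition mx2_mul (A B : mx2) : mx2 :=
  Mx2 (m11 A * m11 B + m12 A * m21 B) (m11 A * m12 B + m12 A * m22 B)
      (m21 A * m11 B + m22 A * m21 B) (m21 A * m12 B + m22 A * m22 B).

Definition mx2_one : mx2 := Mx2 1 0 0 1.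

Definition mx2_tr (A : mx2) : nat := m11 A + m22 A.

Definition mx2_le (A B : mx2) : bool :=
  [&& m11 A <= m11 B, m12 A <= m12 B, m21 A <= m21 B & m22 A <= m22 B].

Definition letter2 (t : bool) : mx2 := if t then Mx2 1 1 0 1 else Mx2 1 0 1 1.

Definition word2 (w : seq bool) : mx2 := foldr (fun t => mx2_mul (letter2 t)) mx2_one w.

Definition wtr (w : seq bool) : nat := mx2_tr (word2 w).

Lemma mx2_mulA A B C : mx2_mul A (mx2_mul B C) = mx2_mul (mx2_mul A B) C.
Proof. by case: A B C => ???? [????] [????]; rewrite /mx2_mul /=; congr Mx2; ring. Qed.

Lemma mx2_mul1m A : mx2_mul mx2_one A = A.
Proof. by case: A => ????; rewrite /mx2_mul /=; congr Mx2; lia. Qed.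

Lemma mx2_mulm1 A : mx2_mul A mx2_one = A.
Proof. by case: A => ????; rewrite /mx2_mul /=; congr Mx2; lia. Qed.

Lemma word2_cat u v : word2 (u ++ v) = mx2_mul (word2 u) (word2 v).
Proof. by elim: u => [|t u IH] /=; rewrite ?mx2_mul1m // IH mx2_mulA. Qed.

Definition int_of_mx2 (A : mx2) : 'M[int]_2 :=
  \matrix_(i < 2, j < 2)
    Posz (if i == 0 :> nat then if j == 0 :> nat then m11 A else m12 A
          else if j == 0 :> nat then m21 A else m22 A).

Lemma int_of_mx2_mul A B : int_of_mx2 (mx2_mul A B) = (int_of_mx2 A *m int_of_mx2 B)%R.
Proof.
apply/matrixP => i j; rewrite !mxE big_ord_recl big_ord1 !mxE.
by case: i j => [[|[]] //] ? [[|[]] //] ?; rewrite /= PoszD !PoszM.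
Qed.

Lemma int_of_word2 w : int_of_mx2 (word2 w) = (\prod_(t <- w) letter_mx t)%R.
Proof.
have int_of_letter2 t : int_of_mx2 (letter2 t) = letter_mx t.
  by apply/matrixP; case: t => -[[|[]] //] ? [[|[]] //] ?; rewrite !mxE.
elim: w => [|t w IH]; last by rewrite big_cons /= int_of_mx2_mul IH int_of_letter2.
by rewrite big_nil; apply/matrixP => -[[|[]] //] ? [[|[]] //] ?; rewrite !mxE.
Qed.

Lemma word_traceE w : word_trace w = Posz (wtr w).
Proof.
by rewrite /word_trace -int_of_word2 /mxtrace big_ord_recl big_ord1 !mxE PoszD.
Qed.

Lemma mx2_le_refl A : mx2_le A A.
Proof. by rewrite /mx2_le !leqnn. Qed.

Lemma mx2_le_trans B A C : mx2_le A B -> mx2_le B C -> mx2_le A C.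
Proof. by rewrite /mx2_le => /and4P[????] /and4P[????]; apply/and4P; split; lia. Qed.

Lemma mx2_le_mul A A' B B' :
  mx2_le A A' -> mx2_le B B' -> mx2_le (mx2_mul A B) (mx2_mul A' B').
Proof.
case: A A' B B' => ???? [????] [????] [????] /and4P[/= ????] /and4P[/= ????].
by apply/and4P; split; apply: leq_add; apply: leq_mul.
Qed.

Lemma mx2_le_tr A B : mx2_le A B -> mx2_tr A <= mx2_tr B.
Proof. by case/and4P => ????; apply: leq_add. Qed.

Lemma word2_ge1 w : mx2_le mx2_one (word2 w).
Proof.
elim: w => [|t w IH] /=; first exact: mx2_le_refl.
by rewrite -[mx2_one]mx2_mul1m; apply: mx2_le_mul => //; case: t.
Qed.

Lemma word2_le_cat u v v' z :
  mx2_le (word2 v') (word2 v) -> mx2_le (word2 (u ++ v' ++ z)) (word2 (u ++ v ++ z)).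
Proof.
move=> le_v; rewrite !word2_cat.
exact: mx2_le_mul (mx2_le_refl _) (mx2_le_mul le_v (mx2_le_refl _)).
Qed.

Lemma word2_infix u v z : mx2_le (word2 v) (word2 (u ++ v ++ z)).
Proof.
rewrite !word2_cat.
have := mx2_le_mul (word2_ge1 u) (mx2_le_mul (mx2_le_refl (word2 v)) (word2_ge1 z)).
by rewrite mx2_mul1m mx2_mulm1.
Qed.

Lemma wtr_le_cat u v v' z :
  mx2_le (word2 v') (word2 v) -> wtr (u ++ v' ++ z) <= wtr (u ++ v ++ z).
Proof. by move=> le_v; apply/mx2_le_tr/word2_le_cat. Qed.

Lemma wtr_infix u v z : wtr v <= wtr (u ++ v ++ z).
Proof. exact/mx2_le_tr/word2_infix. Qed.

Lemma word2_nseq b n : word2 (nseq n b) = if b then Mx2 1 n 0 1 else Mx2 1 0 n 1.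
Proof. by elim: n => [|n /= ->]; case: b => //; rewrite /mx2_mul /=; congr Mx2; lia. Qed.

Lemma wtr_nseq b n : wtr (nseq n b) = 2.
Proof. by rewrite /wtr word2_nseq; case: b. Qed.

Lemma wtr_nseq_cat b k m : wtr (nseq k b ++ nseq m (~~ b)) = 2 + k * m.
Proof. by rewrite /wtr word2_cat !word2_nseq; case: b; rewrite /mx2_tr /=; lia. Qed.

Lemma nseqSr (T : Type) (x : T) n : nseq n.+1 x = nseq n x ++ [:: x].
Proof. by rewrite -addn1 nseqD. Qed.

Definition mixed (w : seq bool) : Prop := exists u t v, w = u ++ [:: t; ~~ t] ++ v.

Lemma mixed_letter_le b w : mixed w -> mx2_le (letter2 b) (word2 w).
Proof.
case=> u [t [v ->]]; apply: mx2_le_trans (word2_infix _ _ _).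
by case: t b => -[].
Qed.

Lemma mixed_wtr w : mixed w -> 2 < wtr w.
Proof. by case=> u [t [v ->]]; apply: leq_trans (wtr_infix _ _ _); case: t. Qed.

Lemma constant_or_mixed w : w != [::] -> (exists b, w = nseq (size w) b) \/ mixed w.
Proof.
elim: w => [//|t [|t' w] IH _]; first by left; exists t.
case: (IH isT) => [[b /= [-> Ew]]|[u [t0 [v E]]]].
  case: (eqVneq t b) => [->|tb]; first by left; exists b; rewrite /= -Ew.
  by right; exists [::], t, w; case: t b tb {Ew} => -[].
by right; exists (t :: u), t0, v; rewrite E.
Qed.

Lemma power_cases b w :
  w != [::] -> [\/ w = nseq (size w) b, w = nseq (size w) (~~ b) | mixed w].
Proof.
case/constant_or_mixed => [[c wE]|]; last exact: Or33.
rewrite wE size_nseq; case: (eqVneq c b) => [->|cb]; first exact: Or31.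
by apply: Or32; case: c b cb {wE} => -[].
Qed.

Section Paths.
Variables (D : finType) (s : {perm D}).
Implicit Types (a b : D -> option D) (d e f y : D) (w : seq bool).

Lemma npath_neq0 a d w e : npath s a d w e -> w != [::].
Proof. by case: w. Qed.

Lemma npath_cat a d w1 f y w2 e :
  npath s a d w1 f -> a f = Some y -> npath s a y w2 e -> npath s a d (w1 ++ w2) e.
Proof.
elim: w1 d => [//|t [|t' w1] IH] d /=.
  by move=> <- af; case: w2 {IH} => // t2 w2; exists y.
by case=> d' [ad' p1] af p2; exists d'; split; last exact: IH p1 af p2.
Qed.

Lemma npath_catP a d w1 w2 e : w1 != [::] -> w2 != [::] ->
  npath s a d (w1 ++ w2) e ->
  exists f y, [/\ npath s a d w1 f, a f = Some y & npath s a y w2 e].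
Proof.
elim: w1 d => [//|t [|t' w1] IH] d _ w2_ne /=.
  by case: w2 {IH} w2_ne => // t2 w2 _ [y [ay p2]]; exists (turn s t d), y.
case=> d' [ad' p]; have [f [y [p1 af p2]]] := IH d' isT w2_ne p.
by exists f, y; split => //; exists d'.
Qed.

Lemma npath_cons_turn a d d' t t' w e :
  turn s t d = turn s t' d' -> npath s a d (t :: w) e -> npath s a d' (t' :: w) e.
Proof. by case: w => [|? ?] /= ->. Qed.

Lemma npath_sub a b d w e :
  (forall f y, a f = Some y -> b f = Some y) -> npath s a d w e -> npath s b d w e.
Proof.
move=> ab; elim: w d => [//|t [|t' w] IH] d //=.
by case=> d' [ad' p]; exists d'; split; [exact: ab | exact: IH].
Qed.

Lemma turnK t d : turn s (~~ t) (turn s t d) = d.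
Proof. by case: t; rewrite /turn /= ?permK ?permKV. Qed.

Lemma turn_turn t d : triangles s -> turn s t (turn s t d) = turn s (~~ t) d.
Proof.
move=> tri; have [_ s3] := tri d; have [_ s3'] := tri ((s^-1)%g ((s^-1)%g d)).
by case: t; rewrite /turn /=; [rewrite -{2}s3 permK | rewrite !permKV in s3'].
Qed.

Section Glue.
Variables (a : D -> option D) (h1 h2 : D).
Hypotheses (ah1 : a h1 = None) (ah2 : a h2 = None) (h12 : h1 != h2).
Local Notation a' := (glue a h1 h2).

Lemma glue_wf : gluing_wf a -> gluing_wf a'.
Proof.
move=> wf d e; rewrite /glue.
case: (eqVneq d h1) => [->|dh1]; first by case=> <-; rewrite eq_sym (negPf h12) eqxx.
case: (eqVneq d h2) => [->|dh2]; first by case=> <-; rewrite eqxx.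
move=> ad; have [ed ae] := wf _ _ ad; split => //.
case: (eqVneq e h1) => [eh1|//]; first by rewrite eh1 ah1 in ae.
by case: (eqVneq e h2) => [eh2|//]; rewrite eh2 ah2 in ae.
Qed.

Lemma glue_old f y : a f = Some y -> a' f = Some y.
Proof.
rewrite /glue; case: (eqVneq f h1) => [->|_]; first by rewrite ah1.
by case: (eqVneq f h2) => [->|_] //; rewrite ah2.
Qed.

Lemma npath_glue_sub d w e : npath s a d w e -> npath s a' d w e.
Proof. exact/npath_sub/glue_old. Qed.

Lemma glue_None d : a' d = None -> a d = None /\ d \notin [:: h1; h2].
Proof. by rewrite /glue !inE; case: (d == h1); case: (d == h2). Qed.

Lemma glue_new e e' : e \in [:: h1; h2] -> a' e = Some e' -> e' \in [:: h1; h2].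
Proof.
rewrite /glue !inE => /orP[] /eqP ->; rewrite eqxx; first by case=> <-; rewrite eqxx orbT.
by rewrite eq_sym (negPf h12) => -[<-]; rewrite eqxx.
Qed.

Lemma glued_None e : e \in [:: h1; h2] -> a e = None.
Proof. by rewrite !inE => /orP[] /eqP ->. Qed.

Lemma npath_glue d w e : npath s a' d w e ->
  npath s a d w e \/
  exists w1 w2 f f', [/\ w = w1 ++ w2, npath s a d w1 f, f \in [:: h1; h2],
                         a' f = Some f' & npath s a' f' w2 e].
Proof.
elim: w d => [//|t [|t' w] IH] d /=; first by left.
case=> d' [a'd' p]; set f := turn s t d in a'd' *.
case: (boolP (f \in [:: h1; h2])) => [fh|fh].
  by right; exists [:: t], (t' :: w), f, d'.
have ad' : a f = Some d'.
  by move: a'd' fh; rewrite /glue !inE; case: (f == h1); case: (f == h2).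
case: (IH _ p) => [pold|[w1 [w2 [g [g' [-> p1 gh a'g p2]]]]]]; first by left; exists d'.
right; exists (t :: w1), w2, g, g'; split => //.
by case: w1 p1 {p2} => // t1 w1 p1; exists d'.
Qed.

End Glue.
End Paths.

Section Safety.
Variables (R : rcfType) (tau0 : R).
Local Open Scope ring_scope.

Definition tau_le (n : nat) : Prop := tau0 <= n%:R.

Definition cusp_le (n : nat) : Prop := Num.sqrt (tau0 - 2) <= n%:R.

Lemma tau_le_trans m n : (m <= n)%N -> tau_le m -> tau_le n.
Proof. by move=> mn /le_trans; apply; rewrite ler_nat. Qed.

Lemma cusp_le_trans m n : (m <= n)%N -> cusp_le m -> cusp_le n.
Proof. by move=> mn /le_trans; apply; rewrite ler_nat. Qed.

Lemma tau_le_mul k m : 2 <= tau0 -> cusp_le k -> cusp_le m -> tau_le (2 + k * m).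
Proof.
rewrite /cusp_le /tau_le natrD natrM => tau0_ge2 le_k le_m.
have sqrt_ge0 := sqrtr_ge0 (tau0 - 2).
have := sqr_sqrtr (a := tau0 - 2); rewrite subr_ge0 => /(_ tau0_ge2).
have := ler_pM sqrt_ge0 sqrt_ge0 le_k le_m.
rewrite expr2; lra.
Qed.

Lemma cusp_le_gt0 n : 2 < tau0 -> cusp_le n -> (0 < n)%N.
Proof.
move=> tau0_gt2 /(lt_le_trans _)-/(_ 0).
by rewrite sqrtr_gt0 subr_gt0 ltr0n => /(_ tau0_gt2).
Qed.

Variables (D : finType) (s : {perm D}).

Definition tau_safe (a : D -> option D) : Prop :=
  forall h h' w, a h = None -> a h' = None -> h != h' ->
  npath s a h w h' -> (2 < wtr w)%N -> tau_le (wtr w).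

Definition cusp_safe (a : D -> option D) : Prop :=
  forall h h' b n, a h = None -> a h' = None -> npath s a h (nseq n b) h' -> cusp_le n.

Lemma safeP a : safe s a tau0 <-> tau_safe a /\ cusp_safe a.
Proof.
rewrite /safe /half_edge /tau_ge; split=> -[tau_a cusp_a]; split.
- move=> h h' w /eqP ah /eqP ah' hh' p w_gt2.
  by have := tau_a h h' ah ah' hh' w; rewrite word_traceE ltz_nat; apply.
- move=> h h' b n /eqP ah /eqP ah' p.
  by have := cusp_a h h' _ ah ah' p; rewrite size_nseq; apply; case: b {p}; [left|right].
- move=> h h' /eqP ah /eqP ah' hh' w p; rewrite word_traceE ltz_nat.
  exact: tau_a ah ah' hh' p.
- move=> h h' w /eqP ah /eqP ah' p cw.
  have [b wE] : exists b, w = nseq (size w) b by case: cw; eexists; eassumption.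
  by apply: (cusp_a h h' b) ah ah' _; rewrite -wE.
Qed.

End Safety.

Section GlueSafe.
Variables (R : rcfType) (tau0 : R) (D : finType) (s : {perm D}).
Variables (a : D -> option D) (h1 h2 : D).
Hypotheses (tau0_ge3 : (3 <= tau0)%R) (tri : triangles s) (wf : gluing_wf a).
Hypotheses (ah1 : a h1 = None) (ah2 : a h2 = None) (h12 : h1 != h2).
Hypotheses (tau_a : tau_safe tau0 s a) (cusp_a : cusp_safe tau0 s a).
Local Notation a' := (glue a h1 h2).
Local Notation tau_le := (tau_le tau0).
Local Notation cusp_le := (cusp_le tau0).

Let tau0_gt2 : (2 < tau0)%R. Proof. by apply: lt_le_trans tau0_ge3; rewrite ltr_nat. Qed.
Let tau0_ge2 : (2 <= tau0)%R. Proof. exact: ltW. Qed.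
Let wf' : gluing_wf a'. Proof. exact: glue_wf. Qed.

Lemma glue_cusp_safe : cusp_safe tau0 s a'.
Proof.
move=> h h' b n /glue_None[ah _] /glue_None[ah' _] p.
case: (npath_glue p) => [|[w1 [w2 [f [f' [nE p1 fh _ _]]]]]]; first exact: cusp_a ah ah'.
have /all_pred1P w1E : all (pred1 b) w1.
  by have := all_pred1_nseq b n; rewrite nE all_cat => /andP[].
apply: (cusp_le_trans (m := size w1)); first by rewrite -(size_nseq n b) nE size_cat leq_addr.
by apply: (cusp_a (b := b) ah (glued_None ah1 ah2 fh)); rewrite -w1E.
Qed.

Lemma power_segment_bound b K x y w z :
  cusp_le K -> a x = None -> a y = None -> npath s a x w y ->
  w = nseq (size w) (~~ b) \/ x != y /\ mixed w -> tau_le (wtr (nseq K b ++ w ++ z)).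
Proof.
move=> long ax ay p [wE|[xy mw]]; last first.
  by apply: tau_le_trans (tau_a ax ay xy p (mixed_wtr mw)); exact: wtr_infix.
have cusp_w : cusp_le (size w) by apply: (cusp_a (b := ~~ b) ax ay); rewrite -wE.
apply: tau_le_trans (tau_le_mul tau0_ge2 long cusp_w).
by rewrite -(wtr_nseq_cat b) catA -wE; exact: (wtr_infix [::] _ z).
Qed.

Section Induction.
Variables (h h' : D) (W : seq bool).
Hypotheses (a'h' : a' h' = None) (W_gt2 : (2 < wtr W)%N).
Hypothesis IH : forall W', (size W' < size W)%N -> npath s a' h W' h' ->
  (2 < wtr W')%N -> tau_le (wtr W').

Lemma loop_bound b K p g g' X Q :
  W = nseq K.+1 b ++ X ++ Q -> cusp_le (K.+1 + p) ->
  npath s a' h (nseq K.+1 b) g -> a' g = Some g' -> npath s a' g' X g' ->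
  npath s a' g Q h' -> mx2_le (word2 (nseq p b ++ nseq p.+1 (~~ b))) (word2 X) ->
  tau_le (wtr W).
Proof.
elim: K p g g' X Q => [|K IHK] p g g' X Q WE long pK a'g pX pQ le_X.
  apply: tau_le_trans (tau_le_mul tau0_ge2 long long).
  rewrite -(wtr_nseq_cat b) WE; apply: leq_trans (wtr_le_cat [:: b] Q le_X).
  by rewrite catA; exact: (wtr_infix [::] _ Q).
case: Q pQ WE => [//|t Q] pQ WE.
move: pK; rewrite (nseqSr _ K.+1) => /npath_catP[//|//|f [y [pf a'f yg]]].
case: (eqVneq t b) => [tb|tnb].
- (* Shortcut: the last b of the power, the loop and the next b become a single ~~b. *)
  set W' := nseq K.+1 b ++ ~~ b :: Q.
  have pW' : npath s a' h W' h'.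
    apply: npath_cat pf a'f _; apply: npath_cons_turn pQ.
    by rewrite -yg tb turn_turn.
  have le_W' : (wtr W' <= wtr W)%N.
    rewrite (_ : W = nseq K.+1 b ++ (b :: X ++ [:: b]) ++ Q); last first.
      by rewrite WE tb (nseqSr _ K.+1) -!catA /= -catA.
    rewrite /W'; apply: (@wtr_le_cat _ _ [:: ~~ b] Q).
    apply: mx2_le_trans (word2_infix [:: b] X [:: b]).
    exact: mx2_le_trans (word2_infix (nseq p b) [:: ~~ b] (nseq p (~~ b))) le_X.
  apply: tau_le_trans le_W' (IH _ pW' _).
  + rewrite WE /W' !size_cat /= !size_nseq; have := npath_neq0 pX.
    by rewrite -size_eq0; lia.
  + by apply: mixed_wtr; exists (nseq K b), b, Q; rewrite /W' nseqSr -catA.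
- (* Backtrack: b X ~~b is a loop at the side y through which the last b entered. *)
  have tE : t = ~~ b by move: tnb; case: (t); case: (b).
  subst t; move: pQ.
  have [_ a'y] := wf' a'f.
  case: Q WE => [|t Q] WE /=; rewrite -yg turnK.
    by move=> yh'; move: a'h'; rewrite -yh' a'y.
  rewrite a'y => -[_ [[<-] pQ]].
  apply: (IHK p.+1 f y (b :: X ++ [:: ~~ b]) (t :: Q)) => //.
  + by rewrite WE (nseqSr _ K.+1) -!catA /= -catA.
  + by move: long; rewrite addSnnS.
  + rewrite -cat1s; apply: (npath_cat yg a'g).
    by apply: (npath_cat pX (proj2 (wf' a'g))); rewrite /= -yg turnK.
  + by rewrite (nseqSr _ p.+1) catA; exact: (word2_le_cat [:: b] [:: ~~ b] le_X).
Qed.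

Lemma crossing_bound b n K e e' Q :
  (size Q <= n)%N -> W = nseq K b ++ Q -> cusp_le K ->
  npath s a' h (nseq K b) e -> e \in [:: h1; h2] -> a' e = Some e' -> npath s a' e' Q h' ->
  tau_le (wtr W).
Proof.
elim: n K e e' Q => [|n IHn] K e e' Q + WE long pK eh a'e pQ; first by case: Q pQ {WE}.
move=> size_Q; have e'h := glue_new h12 eh a'e; have ae' := glued_None ah1 ah2 e'h.
have [ah' h'_new] := glue_None a'h'.
case: (npath_glue pQ) => [pQ_old|[w1 [w2 [f [f' [QE p1 fh a'f p2]]]]]].
  have e'h' : e' != h' by apply: contraNneq h'_new => <-.
  rewrite WE -[Q]cats0; case: (power_cases b (npath_neq0 pQ_old)) => [QE|QE|mQ].
  - by move: W_gt2; rewrite WE QE -nseqD wtr_nseq.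
  - exact: power_segment_bound long ae' ah' pQ_old (or_introl QE).
  - exact: power_segment_bound long ae' ah' pQ_old (or_intror (conj e'h' mQ)).
have af := glued_None ah1 ah2 fh.
case: (power_cases b (npath_neq0 p1)) => [w1E|w1E|mw1].
- apply: (IHn (K + size w1) f f' w2) => //.
  + rewrite -ltnS; apply: leq_trans size_Q; rewrite QE size_cat -add1n leq_add2r.
    by rewrite lt0n size_eq0 (npath_neq0 p1).
  + by rewrite WE QE catA nseqD -w1E.
  + by apply: cusp_le_trans long; apply: leq_addr.
  + rewrite nseqD; apply: (npath_cat pK a'e); rewrite -w1E.
    exact: npath_glue_sub p1.
- by rewrite WE QE; apply: power_segment_bound long ae' af p1 (or_introl w1E).
- case: (eqVneq e' f) => [e'f|e'f]; last first.
    by rewrite WE QE; apply: power_segment_bound long ae' af p1 (or_intror (conj e'f mw1)).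
  subst f; have f'e : f' = e by have [_] := wf' a'e; rewrite a'f => -[].
  have K_gt0 := cusp_le_gt0 tau0_gt2 long.
  case: K K_gt0 WE long pK {IHn} => // K _ WE long pK.
  apply: (loop_bound (b := b) (K := K) (p := 0) (g := e) (g' := e') (X := w1) (Q := w2)) => //.
  + by rewrite WE QE.
  + by rewrite addn0.
  + exact: npath_glue_sub p1.
  + by rewrite -f'e.
  + by rewrite /= mx2_mulm1; exact: mixed_letter_le.
Qed.

End Induction.

Lemma glue_tau_safe : tau_safe tau0 s a'.
Proof.
move=> h h' W a'h a'h' hh'; have [n] := ubnP (size W).
elim: n W => // n IHn W; rewrite ltnS => W_n pW W_gt2.
have IH W' : (size W' < size W)%N -> npath s a' h W' h' -> (2 < wtr W')%N -> tau_le (wtr W').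
  by move=> W'W; apply: IHn; apply: leq_trans W'W W_n.
have [[ah h_new] [ah' _]] := (glue_None a'h, glue_None a'h').
case: (npath_glue pW) => [|[w1 [w2 [e [e' [WE p1 eh a'e p2]]]]]]; first by move/tau_a; apply.
have he : h != e by apply: contraNneq h_new => ->.
have ae := glued_None ah1 ah2 eh.
case: (constant_or_mixed (npath_neq0 p1)) => [[b w1E]|mw1].
  apply: (crossing_bound a'h' W_gt2 IH (b := b) (n := size w2) (K := size w1) (e := e)
    (e' := e') (Q := w2)) => //.
  - by rewrite WE -w1E.
  - by apply: (cusp_a (b := b) ah ae); rewrite -w1E.
  - by rewrite -w1E; exact: npath_glue_sub p1.
apply: tau_le_trans (tau_a ah ae he p1 (mixed_wtr mw1)).
by rewrite WE -[w1 ++ w2]cat0s; exact: wtr_infix.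
Qed.

End GlueSafe.

Section Process.
Variables (R : rcfType) (tau0 : R) (D : finType) (s : {perm D}).
Hypotheses (tau0_ge3 : (3 <= tau0)%R) (tri : triangles s).
Implicit Types (a : D -> option D) (ps : seq (D * D)).

Lemma safe_glue a (h1 h2 : D) : gluing_wf a -> safe s a tau0 ->
  admissible s a tau0 h1 h2 -> safe s (glue a h1 h2) tau0.
Proof.
(* The trace condition in [admissible] is already part of [safe s a tau0]. *)
move=> wf /safeP[tau_a cusp_a] [/eqP ah1 /eqP ah2 h12 _]; apply/safeP; split.
  exact: glue_tau_safe.
exact: glue_cusp_safe.
Qed.

Lemma num_half_edges_glue a (h1 h2 : D) :
  a h1 = None -> a h2 = None -> h1 != h2 ->
  num_half_edges a = (num_half_edges (glue a h1 h2)).+2.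
Proof.
move=> ah1 ah2 h12; rewrite /num_half_edges (cardD1 h1) (cardD1 h2).
rewrite !inE /half_edge ah1 ah2 [h2 == h1]eq_sym h12 eqxx add1n add1n; congr _.+2.
apply: eq_card => d; rewrite !inE /glue.
by case: (eqVneq d h1) => //; case: (eqVneq d h2).
Qed.

Lemma run_ok_safe ps a : gluing_wf a -> safe s a tau0 -> run_ok s a tau0 ps ->
  safe s (run_final a ps) tau0 /\
  num_half_edges a = num_half_edges (run_final a ps) + 2 * size ps.
Proof.
elim: ps a => [|[h1 h2] ps IH] a wf safe_a /=; first by rewrite muln0 addn0.
case=> adm run; have [/eqP ah1 /eqP ah2 h12 _] := adm.
have [safe_final card_final] := IH _ (glue_wf ah1 ah2 h12 wf) (safe_glue wf safe_a adm) run.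
by split=> //; rewrite (num_half_edges_glue ah1 ah2 h12) card_final /run_final /=; lia.
Qed.

Lemma safe_admissible a (h h' : D) :
  safe s a tau0 -> half_edge a h -> half_edge a h' -> h != h' -> admissible s a tau0 h h'.
Proof. by case=> tau_a _ ah ah' hh'; split=> //; apply: tau_a. Qed.

End Process.

Unset Implicit Arguments.
Local Open Scope ring_scope.

Theorem lemma2p6 (R : rcfType) (tau0 : R) (D : finType) (s : {perm D})
    (a : D -> option D) :
  3 <= tau0 -> triangles s -> gluing_wf a -> safe s a tau0 ->
  (forall h1 h2, admissible s a tau0 h1 h2 -> safe s (glue a h1 h2) tau0)
  /\
  (forall ps : seq (D * D), run_ok s a tau0 ps ->
     (forall h1 h2, ~ admissible s (run_final a ps) tau0 h1 h2) ->
     num_half_edges (run_final a ps) = (num_half_edges a %% 2)%N).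
Proof.
move=> tau0_ge3 tri wf safe_a; split=> [h1 h2|ps run stuck]; first exact: safe_glue.
have [safe_final ->] := run_ok_safe tau0_ge3 tri wf safe_a run.
have : (num_half_edges (run_final a ps) <= 1)%N.
  rewrite leqNgt; apply/card_gt1P => -[h [h' [hh hh' nh]]].
  exact: stuck _ _ (safe_admissible safe_final hh hh' nh).
by move=> small; rewrite -modnDm modnMr addn0 modn_mod modn_small.
Qed.
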